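(* Let $T$ be a non-abelian finite simple group and let $G$ be a finite group with a normal series $1\unlhd N\unlhd M\unlhd G$ where $N$ and $G/M$ are solvable and $M/N\cong T$. Then a perfect central extension $E$ of $T$ is a section of $G$ if and only if $E$ is a section of $M$.
   Context: A perfect central extension of $T$ is a perfect group $E$ with $E/Z(E)\cong T$. A section of a group is a quotient of a subgroup. *)

From mathcomp Require Import all_boot all_fingroup all_solvable.
Set Implicit Arguments. Unset Strict Implicit. Unset Printing Implicit Defensive.
Local Open Scope group_scope.

Definition perfect (gT : finGroupType) (E : {set gT}) : bool := [~: E, E] == E.

Definition perfect_central_ext (eT tT : finGroupType)
    (E : {group eT}) (T : {group tT}) : Prop :=
  perfect E /\ E / 'Z(E) \isog T.

Definition section_of (gT eT : finGroupType) (E : {group eT}) (G : {group gT})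
    : Prop :=
  exists (H K : {group gT}), [/\ H \subset G, K <| H & H / K \isog E].

From mathcomp Require Import all_boot all_fingroup all_solvable.
Set Implicit Arguments. Unset Strict Implicit. Unset Printing Implicit Defensive.
Local Open Scope group_scope.

(* A perfect section H/K of G survives in every derived subgroup: it is also
   the quotient of H^(n) by H^(n) :&: K. Since G/M is solvable, some G^(n)
   lies in M, so every perfect section of G is already a section of M; the
   converse holds because M is a subgroup of G. *)

Lemma perfect_der (eT : finGroupType) (E : {group eT}) n :
  perfect E -> E^`(n) = E.
Proof. by move=> perE; elim: n => // n IHn; rewrite dergSn IHn; apply/eqP. Qed.

Lemma section_of_subset (gT eT : finGroupType) (E : {group eT})
    (G H : {group gT}) :
  H \subset G -> section_of E H -> section_of E G.
Proof.
move=> sHG [L [K [sLH nKL isoE]]]; exists L, K; split=> //.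
exact: subset_trans sHG.
Qed.

Lemma perfect_section_of_der (gT eT : finGroupType) (E : {group eT})
    (G : {group gT}) n :
  perfect E -> section_of E G -> section_of E G^`(n).
Proof.
move=> perE [H [K [sHG nsKH isoE]]].
have nKHn : H^`(n) \subset 'N(K) := subset_trans (der_sub n H) (normal_norm nsKH).
exists H^`(n)%G, (H^`(n) :&: K)%G; split.
- exact: dergS.
- exact: normalGI (der_sub n H) nsKH.
rewrite /= setIC; apply: isog_trans (second_isog nKHn) _.
by rewrite /= quotient_der ?normal_norm // -(perfect_der n perE) isog_der.
Qed.

Lemma der_sub_of_solvable_quotient (gT : finGroupType) (G M : {group gT}) :
  G \subset 'N(M) -> solvable (G / M) -> exists n, G^`(n) \subset M.
Proof.
move=> nMG /derivedP[n derGM1]; exists n.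
by rewrite -quotient_sub1 ?(subset_trans (der_sub n G)) // quotient_der ?derGM1.
Qed.

Lemma perfect_section_of_solvable_quotient (gT eT : finGroupType)
    (E : {group eT}) (G M : {group gT}) :
  M <| G -> solvable (G / M) -> perfect E ->
  section_of E G -> section_of E M.
Proof.
move=> nsMG solGM perE secG.
have [n sGnM] := der_sub_of_solvable_quotient (normal_norm nsMG) solGM.
exact: section_of_subset sGnM (perfect_section_of_der n perE secG).
Qed.

Theorem lemma1p20 (tT gT eT : finGroupType) (T : {group tT})
    (G M N : {group gT}) (E : {group eT}) :
  simple T -> ~~ abelian T ->
  N <| G -> N \subset M -> M <| G ->
  solvable N -> solvable (G / M) -> M / N \isog T ->
  perfect_central_ext E T ->
  (section_of E G <-> section_of E M).
Proof.
move=> _ _ _ _ nsMG _ solGM _ [perE _]; split.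
- exact: perfect_section_of_solvable_quotient.
- exact: section_of_subset (normal_sub nsMG).
Qed.
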